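(* Let $X$ be a compactum, let $n\geq2$, and let $f:X\to X$ be a function. Consider the statements: (1) $f$ is fully exact; (2) $F_n(f)$ is fully exact; (3) $SF_n(f)$ is fully exact. Then (2) and (3) are equivalent, and (2) implies (1).
   Context: A compactum is a nondegenerate compact, perfect, Hausdorff topological space. $F_n(X)$ is the set of nonempty subsets of $X$ with at most $n$ points, with the Vietoris topology; $F_1(X)=\{\{x\}:x\in X\}$; $F_n(f)(A)=f(A)$. $SF_n(X)=F_n(X)/F_1(X)$ is the quotient collapsing $F_1(X)$ to a point, $q$ the quotient map, $F_X=q(F_1(X))$, and $SF_n(f)(\chi)=q(F_n(f)(q^{-1}(\chi)))$ for $\chi\neq F_X$, $SF_n(f)(F_X)=F_X$. A function $g:Z\to Z$ is fully exact if for every pair of nonempty open $U,V\subseteq Z$ there is $k\in\mathbb{N}$ with $\mathrm{int}(g^k(U)\cap g^k(V))\neq\emptyset$. *)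

From HB Require Import structures.
From mathcomp Require Import all_boot all_order all_algebra.
From mathcomp Require Import all_classical all_reals all_analysis.
Set Implicit Arguments. Unset Strict Implicit. Unset Printing Implicit Defensive.
Import Order.TTheory GRing.Theory Num.Theory.
Local Open Scope classical_set_scope.

Definition compactum (X : topologicalType) : Prop :=
  [/\ exists x y : X, x <> y, compact [set: X], perfect_set [set: X]
    & hausdorff_space X].

(* Interior, relative to a subspace Z of a carrier T, of a set S, where
   [op] is the predicate "open in the space Z". *)
Definition rel_interior (T : Type) (Z : set T) (op : set T -> Prop) (S : set T)
  : set T :=
  \bigcup_(W in [set W | W `<=` Z /\ op W /\ W `<=` S]) W.

(* g : Z -> Z is fully exact (Z given by the carrier T, the subset Z and
   its family of open sets [op]). *)
Definition fully_exact (T : Type) (Z : set T) (op : set T -> Prop) (g : T -> T)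
  : Prop :=
  forall U V : set T, U `<=` Z -> V `<=` Z -> op U -> op V ->
    U !=set0 -> V !=set0 ->
    exists k : nat,
      rel_interior Z op ((iter k g @` U) `&` (iter k g @` V)) !=set0.

Section Hyperspace.
Variable X : topologicalType.

Definition Fn (n : nat) : set (set X) :=
  [set A | A !=set0 /\ exists s : seq X, size s <= n /\ A = [set x | x \in s]].

Definition F1 : set (set X) := [set A | exists x : X, A = [set x]].

(* Basic open sets of the Vietoris topology (finite intersections of the
   subbasic sets {A | A `<=` U} and {A | A meets V}). *)
Definition vietoris_basic (U : set X) (m : nat) (V : 'I_m -> set X)
  : set (set X) :=
  [set A | A `<=` U /\ forall i : 'I_m, A `&` V i !=set0].

Definition Fn_open (n : nat) (W : set (set X)) : Prop :=
  W `<=` Fn n /\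
  forall A, W A -> exists (U : set X) (m : nat) (V : 'I_m -> set X),
    [/\ open U, forall i, open (V i), vietoris_basic U V A
      & vietoris_basic U V `&` Fn n `<=` W].

Definition Fn_map (f : X -> X) (A : set X) : set X := f @` A.

(* SF_n(X) = F_n(X)/F_1(X): carrier option (set X); None is the point F_X,
   Some A (A in F_n(X) \ F_1(X)) is the class {A}. *)
Definition qmap (A : set X) : option (set X) :=
  if pselect (F1 A) then None else Some A.

Definition SFn (n : nat) : set (option (set X)) := qmap @` Fn n.

Definition SFn_open (n : nat) (W : set (option (set X))) : Prop :=
  W `<=` SFn n /\ Fn_open n (Fn n `&` qmap @^-1` W).

Definition SFn_map (f : X -> X) (chi : option (set X)) : option (set X) :=
  match chi with
  | None => None
  | Some A => qmap (Fn_map f A)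
  end.

End Hyperspace.

From HB Require Import structures.
From mathcomp Require Import all_boot all_order all_algebra.
From mathcomp Require Import all_classical all_reals all_analysis.

Set Implicit Arguments.
Unset Strict Implicit.
Unset Printing Implicit Defensive.
Local Open Scope classical_set_scope.

(** In a perfect Hausdorff space, F_1(X) is nowhere dense in F_n(X) for
   n >= 2: every nonempty open set of F_n(X) contains a nonempty open set of
   sets meeting two disjoint open sets of X.  On open sets avoiding F_1(X)
   the quotient map q is injective and open, and it intertwines F_n(f)^k with
   SF_n(f)^k, so open sets witnessing full exactness pass between F_n(X) and
   SF_n(X) in both directions after such a shrinking.  For F_n(f) => f, the
   union of the members of an open set of F_n(X) is open in X (a point a of a
   member A may be replaced by any y close to a without leaving the Vietoris
   neighbourhood of A), and applied to the interior given by full exactness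
   for <U> = {A | A `<=` U} and <V> it yields an open set inside
   f^k(U) `&` f^k(V). *)

Lemma rel_interior_neq0 (T : Type) (Z : set T) (op : set T -> Prop)
    (S : set T) :
  rel_interior Z op S !=set0 <->
  exists W, [/\ W `<=` Z, op W, W `<=` S & W !=set0].
Proof.
split=> [[x [W [WZ [oW WS]] Wx]] | [W [WZ oW WS [x Wx]]]]; last by exists x, W.
by exists W; split => //; exists x.
Qed.

Lemma open_fin_bigcap (X : topologicalType) (I : finType) (P : set I)
    (V : I -> set X) :
  (forall i, open (V i)) -> open (\bigcap_(i in P) V i).
Proof.
move=> oV; rewrite openE => x Vx.
apply: (@filter_forall X I (fun i y => P i -> V i y)) => i.
have [Pi|nPi] := pselect (P i); last by apply: nearW.
by apply: filterS (open_nbhs_nbhs (conj (oV i) (Vx i Pi))) => y Vy _.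
Qed.

Lemma perfect_open_other (X : topologicalType) (O : set X) (x : X) :
  perfect_set [set: X] -> open O -> O x -> exists2 y, O y & y != x.
Proof.
move=> /perfectTP_ex perfX oO Ox.
have [a [b [Oa Ob ab]]] := perfX O oO (ex_intro _ x Ox).
by have [<-|ax] := eqVneq a x; [exists b; rewrite // eq_sym | exists a].
Qed.

Section Vietoris.
Variables (X : topologicalType) (n : nat).
Implicit Types (A B : set X) (W : set (set X)).

Lemma Fn_openI W1 W2 : Fn_open n W1 -> Fn_open n W2 -> Fn_open n (W1 `&` W2).
Proof.
move=> [W1F oW1] [_ oW2]; split=> [A [/W1F]//|A [/oW1 + /oW2]].
move=> [U1 [m1 [V1 [oU1 oV1 [AU1 AV1] sW1]]]].
move=> [U2 [m2 [V2 [oU2 oV2 [AU2 AV2] sW2]]]].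
pose V i := match fintype.split i with inl j => V1 j | inr j => V2 j end.
have VE1 j : V (lshift m2 j) = V1 j by rewrite /V -/(unsplit (inl j)) unsplitK.
have VE2 j : V (rshift m1 j) = V2 j by rewrite /V -/(unsplit (inr j)) unsplitK.
exists (U1 `&` U2), (m1 + m2)%N, V; split.
- exact: openI.
- by move=> i; rewrite /V; case: fintype.split.
- split=> [x Ax|i]; first by split; [exact: AU1 | exact: AU2].
  by rewrite /V; case: fintype.split.
- move=> B [[BU BV] FB]; split.
  + by apply: sW1; split => //; split=> [x /BU[]//|j]; rewrite -VE1.
  + by apply: sW2; split => //; split=> [x /BU[]//|j]; rewrite -VE2.
Qed.

Lemma Fn_open_basic (U : set X) (m : nat) (V : 'I_m -> set X) :
  open U -> (forall i, open (V i)) -> Fn_open n (vietoris_basic U V `&` Fn n).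
Proof. by move=> oU oV; split=> [A []//|A [bA _]]; exists U, m, V; split. Qed.

Lemma Fn_set1 (x : X) : (0 < n)%N -> Fn n [set x].
Proof.
move=> n_gt0; split; first by exists x.
exists [:: x]; split => //; apply/seteqP; split=> y /=; rewrite inE.
  by move=> ->.
by move/eqP.
Qed.

Lemma open_bigcup_Fn_open W : Fn_open n W -> open (\bigcup_(B in W) B).
Proof.
move=> [WF oW]; rewrite openE => a [A WA Aa].
have [U [m [V [oU oV [AU AV] sW]]]] := oW A WA.
have [_ [s [sn As]]] := WF A WA.
have sa : a \in s by move: Aa; rewrite As.
pose O := U `&` \bigcap_(i in [set i | V i a]) V i.
suff OW : O `<=` \bigcup_(B in W) B.
  apply: filterS OW _; apply: open_nbhs_nbhs; split.
    by apply: openI => //; exact: open_fin_bigcap.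
  by split=> [|i //]; exact: AU.
move=> y [Uy Vy]; pose B := [set` y :: rem a s].
exists B; last by rewrite /B /= inE eqxx.
apply: sW; split; [split|split].
- move=> x; rewrite /B /= inE => /orP[/eqP -> //|/mem_rem xs].
  by apply: AU; rewrite As.
- move=> i; have [z [Az Vz]] := AV i.
  have [za|za] := eqVneq z a.
    by exists y; split; [rewrite /B /= inE eqxx | apply: Vy; rewrite -za].
  exists z; split => //; rewrite /B /= inE; apply/orP; right.
  by move: Az; rewrite As /= (perm_mem (perm_to_rem sa)) inE (negbTE za).
- by exists y; rewrite /B /= inE eqxx.
- exists (y :: rem a s); split => //.
  by rewrite /= size_rem // prednK //; case: (s) sa.
Qed.

Section PerfectHausdorff.
Hypotheses (perfX : perfect_set [set: X]) (hausX : hausdorff_space X).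
Hypothesis n_gt1 : (1 < n)%N.

Lemma Fn_open_two_points W : Fn_open n W -> W !=set0 ->
  exists B x y, [/\ W B, B x, B y & x != y].
Proof.
move=> [WF oW] [A WA]; have [[x Ax] _] := WF A WA.
have [[z Az]|nA] := pselect (F1 A); last first.
  suff [y Ay yx] : exists2 y, A y & y != x by exists A, y, x.
  apply: contra_notP nA => noy; exists x; apply/seteqP; split=> [w Aw|w ->//].
  by apply: (contra_notP _ noy) => wx; exists w => //; apply/eqP.
have [U [m [V [oU oV [AU AV] sW]]]] := oW A WA.
have [y Uy yz] := perfect_open_other perfX oU (AU z ltac:(by rewrite Az)).
pose B := [set` [:: z; y]].
exists B, y, z; split; rewrite /B /= ?inE ?eqxx ?orbT //.
apply: sW; split; [split|split].
- by move=> w; rewrite /= !inE => /orP[]/eqP->//; apply: AU; rewrite Az.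
- move=> i; have [w [+ Vw]] := AV i; rewrite Az /= => wz.
  by exists z; split; [rewrite /= inE eqxx | rewrite -wz].
- by exists z; rewrite /= inE eqxx.
- by exists [:: z; y].
Qed.

Lemma Fn_open_avoid_F1 W : Fn_open n W -> W !=set0 ->
  exists W0, [/\ W0 `<=` W, Fn_open n W0, W0 !=set0 & W0 `<=` ~` @F1 X].
Proof.
move=> oW Wn0; have [B [x [y [WB Bx By xy]]]] := Fn_open_two_points oW Wn0.
have := hausX; rewrite open_hausdorff => /(_ x y xy) [[Ox Oy] /=].
move=> [/set_mem xOx /set_mem yOy] [oOx oOy /eqP OxOy].
pose V (i : 'I_2) := if i == ord0 then Ox else Oy.
have oV i : open (V i) by rewrite /V; case: ifP.
exists (W `&` (vietoris_basic setT V `&` Fn n)); split.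
- by move=> ? [].
- exact: Fn_openI oW (Fn_open_basic openT oV).
- exists B; split => //; split; last exact: oW.1.
  by split=> // i; rewrite /V; case: ifP => _; [exists x | exists y].
- move=> C [_ [[_ CV] _]] [z Cz].
  have [w1 [+ Oxw1]] := CV ord0; have [w2 [+ Oyw2]] := CV (@Ordinal 2 1 isT).
  rewrite Cz /= => w2z w1z; rewrite -[False]/(set0 z) -OxOy.
  by split; [rewrite -w1z | rewrite -w2z].
Qed.

End PerfectHausdorff.

End Vietoris.

Section Quotient.
Variable X : topologicalType.
Implicit Types (A B : set X) (W : set (set X)) (f : X -> X).

Lemma qmap_nonsingleton A : ~ F1 A -> qmap A = Some A.
Proof. by rewrite /qmap; case: pselect. Qed.

Lemma qmap_Some A B : qmap A = Some B -> A = B.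
Proof. by rewrite /qmap; case: pselect => // _ [->]. Qed.

Lemma qmap_Fn_map f A : qmap (Fn_map f A) = SFn_map f (qmap A).
Proof.
rewrite {2}/qmap; case: pselect => [[x Ax]|//] /=.
by rewrite /qmap /Fn_map Ax image_set1; case: pselect => // -[]; exists (f x).
Qed.

Lemma qmap_iter f k A :
  qmap (iter k (Fn_map f) A) = iter k (SFn_map f) (qmap A).
Proof. by elim: k => //= k IHk; rewrite qmap_Fn_map IHk. Qed.

Lemma iter_Fn_map f k A : iter k (Fn_map f) A = iter k f @` A.
Proof.
by elim: k => [|k IHk] /=; rewrite ?image_id // IHk /Fn_map image_comp.
Qed.

Lemma Fn_preimage_qmap_image n W : W `<=` Fn n -> W `<=` ~` @F1 X ->
  Fn n `&` @qmap X @^-1` (@qmap X @` W) = W.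
Proof.
move=> WF WF1; apply/seteqP; split=> [A [_ [B WB qBA]]|A WA]; last first.
  by split; [exact: WF | exists A].
by move: qBA; rewrite (qmap_nonsingleton (WF1 B WB)) => /esym/qmap_Some ->.
Qed.

Lemma SFn_open_qmap_image n W : Fn_open n W -> W `<=` ~` @F1 X ->
  SFn_open n (@qmap X @` W).
Proof.
move=> oW WF1; split; first by move=> _ [A WA <-]; exists A => //; exact: oW.1.
by rewrite Fn_preimage_qmap_image //; exact: oW.1.
Qed.

End Quotient.

Section FullyExact.
Variables (X : topologicalType) (n : nat) (f : X -> X).

Lemma fully_exact_of_Fn : (0 < n)%N ->
  fully_exact (@Fn X n) (Fn_open n) (Fn_map f) -> fully_exact [set: X] open f.
Proof.
move=> n_gt0 FE U V _ _ oU oV [u Uu] [v Vv].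
pose upper (O : set X) := vietoris_basic O (fun _ : 'I_0 => set0) `&` Fn n.
have upper_open O : open O -> Fn_open n (upper O).
  by move=> oO; apply: Fn_open_basic oO _; case.
have upper_set1 O x : O x -> upper O [set x].
  by move=> Ox; split; [split=> [y ->|[]] | exact: Fn_set1].
have [k /rel_interior_neq0 [W [_ oW WUV [A WA]]]] :=
  FE _ _ (upper_open U oU).1 (upper_open V oV).1 (upper_open U oU)
    (upper_open V oV) (ex_intro _ _ (upper_set1 U u Uu))
    (ex_intro _ _ (upper_set1 V v Vv)).
have iter_upper O B : (iter k (Fn_map f) @` upper O) B -> B `<=` iter k f @` O.
  move=> [C [[CO _] _] <-]; rewrite iter_Fn_map => _ [c Cc <-].
  by exists c => //; exact: CO.
exists k; apply/rel_interior_neq0; exists (\bigcup_(B in W) B); split => //.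
- exact: (open_bigcup_Fn_open oW).
- move=> x [B WB Bx]; have [/iter_upper BU /iter_upper BV] := WUV B WB.
  by split; [exact: BU | exact: BV].
- by have [[a Aa] _] := oW.1 A WA; exists a, A.
Qed.

Section PerfectHausdorff.
Hypotheses (perfX : perfect_set [set: X]) (hausX : hausdorff_space X).
Hypothesis n_gt1 : (1 < n)%N.

Lemma fully_exact_SFn_of_Fn :
  fully_exact (@Fn X n) (Fn_open n) (Fn_map f) ->
  fully_exact (@SFn X n) (SFn_open n) (SFn_map f).
Proof.
move=> FE U V UZ VZ [_ oU] [_ oV].
move=> [_ /[dup] /UZ [A FA <-] UA] [_ /[dup] /VZ [B FB <-] VB].
have [k /rel_interior_neq0 [W [_ oW WUV Wn0]]] :=
  FE _ _ (@subIsetl _ _ _) (@subIsetl _ _ _) oU oV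
    (ex_intro _ A (conj FA UA)) (ex_intro _ B (conj FB VB)).
have [W0 [W0W oW0 W0n0 W0F1]] := Fn_open_avoid_F1 perfX hausX n_gt1 oW Wn0.
exists k; apply/rel_interior_neq0; exists (@qmap X @` W0); split.
- exact: (SFn_open_qmap_image oW0 W0F1).1.
- exact: SFn_open_qmap_image.
- move=> _ [D /W0W /WUV [[C1 [_ UC1] eC1] [D1 [_ VD1] eD1]] <-].
  split; [exists (qmap C1) | exists (qmap D1)] => //.
    by rewrite -qmap_iter eC1.
  by rewrite -qmap_iter eD1.
- exact: image_nonempty W0n0.
Qed.

Lemma fully_exact_Fn_of_SFn :
  fully_exact (@SFn X n) (SFn_open n) (SFn_map f) ->
  fully_exact (@Fn X n) (Fn_open n) (Fn_map f).
Proof.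
move=> FE U V _ _ oU oV Un0 Vn0.
have [U1 [U1U oU1 U1n0 U1F1]] := Fn_open_avoid_F1 perfX hausX n_gt1 oU Un0.
have [V1 [V1V oV1 V1n0 V1F1]] := Fn_open_avoid_F1 perfX hausX n_gt1 oV Vn0.
have oqU1 := SFn_open_qmap_image oU1 U1F1.
have oqV1 := SFn_open_qmap_image oV1 V1F1.
have [k /rel_interior_neq0 [W [WS [_ oW] WUV [_ /[dup] /WS [C FC <-] WC]]]] :=
  FE _ _ oqU1.1 oqV1.1 oqU1 oqV1
    (image_nonempty _ U1n0) (image_nonempty _ V1n0).
(* W may contain F_X, whose preimage F_1(X) cannot be pulled back along q. *)
have [W0 [W0W oW0 W0n0 W0F1]] :=
  Fn_open_avoid_F1 perfX hausX n_gt1 oW (ex_intro _ C (conj FC WC)).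
exists k; apply/rel_interior_neq0; exists W0; split => //; first exact: oW0.1.
move=> D W0D; have [_ /WUV [eU eV]] := W0W D W0D.
have lift_iter O O' : O `<=` O' ->
    (iter k (SFn_map f) @` (@qmap X @` O)) (qmap D) ->
    (iter k (Fn_map f) @` O') D.
  move=> OO' [_ [E OE <-]]; rewrite -qmap_iter (qmap_nonsingleton (W0F1 D W0D)).
  by move/qmap_Some <-; exists E => //; exact: OO'.
by split; [exact: lift_iter U1U eU | exact: lift_iter V1V eV].
Qed.

End PerfectHausdorff.

End FullyExact.

Theorem theorem23 (X : topologicalType) (n : nat) (f : X -> X) :
  compactum X -> (2 <= n)%N ->
  (fully_exact (@Fn X n) (Fn_open (X:=X) n) (Fn_map f) <->
   fully_exact (@SFn X n) (SFn_open (X:=X) n) (SFn_map f)) /\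
  (fully_exact (@Fn X n) (Fn_open (X:=X) n) (Fn_map f) ->
   fully_exact [set: X] open f).
Proof.
move=> [_ _ perfX hausX] n_gt1; split; first split.
- exact: fully_exact_SFn_of_Fn.
- exact: fully_exact_Fn_of_SFn.
- exact/fully_exact_of_Fn/ltnW.
Qed.
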